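(* If $f:T^2\to\mathbb R^4$ is a conformal immersion and $\alpha\in\mathrm{span}_{\mathbb H}\{1,f\}\subset H^0$ (nowhere vanishing where defined), then the Darboux transform of $f$ given by $\alpha$ is a constant map $\hat f=c$ with $c\in\mathbb H\cup\{\infty\}$. In particular, if the complex dimension of the space of global holomorphic sections is minimal, that is $\dim_{\mathbb C}H^0=4$, then every Darboux transform given by the trivial multiplier is constant.
   Context: Identify $\mathbb R^4=\mathbb H$, $S^4=\mathbb{HP}^1=\mathbb H\cup\{\infty\}$ with $x\mapsto\begin{pmatrix}x\\1\end{pmatrix}\mathbb H$ and $\infty=\begin{pmatrix}1\\0\end{pmatrix}\mathbb H$. Let $T^2=\mathbb C/\Gamma$ and view $f$ as a $\Gamma$-periodic map on $\mathbb C$ with left normal $N$ ($*df=N\,df$). A map $\alpha:\mathbb C\to\mathbb H$ is holomorphic if $*d\alpha=N\,d\alpha$; $H^0$ denotes the space of $\Gamma$-periodic holomorphic maps (trivial multiplier), a right quaternionic (hence complex) vector space; $1,f\in H^0$. Darboux transform given by a holomorphic section with multiplier $\alpha$: define $\hat T$ by $d\alpha=-df\,\hat T\alpha$, $\nu=\hat T\alpha$, and set $\hat f=\begin{pmatrix}f\nu+\alpha\\ \nu\end{pmatrix}\mathbb H\in\mathbb{HP}^1$ (equal to $f+\hat T^{-1}$ where $\hat T\ne0$; if $\alpha$ is constant then $\hat T=0$ and $\hat f=\infty$). *)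

From Stdlib Require Import Reals.
From Coquelicot Require Import Coquelicot.
Open Scope R_scope.

(** * Quaternions H = R^4, basis 1, i, j, k *)
Record quat := Q { q0 : R; q1 : R; q2 : R; q3 : R }.

Definition qzero : quat := Q 0 0 0 0.
Definition qone : quat := Q 1 0 0 0.
Definition qadd (a b : quat) : quat :=
  Q (q0 a + q0 b) (q1 a + q1 b) (q2 a + q2 b) (q3 a + q3 b).
Definition qopp (a : quat) : quat := Q (- q0 a) (- q1 a) (- q2 a) (- q3 a).
Definition qmul (a b : quat) : quat :=
  Q (q0 a * q0 b - q1 a * q1 b - q2 a * q2 b - q3 a * q3 b)
    (q0 a * q1 b + q1 a * q0 b + q2 a * q3 b - q3 a * q2 b)
    (q0 a * q2 b - q1 a * q3 b + q2 a * q0 b + q3 a * q1 b)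
    (q0 a * q3 b + q1 a * q2 b - q2 a * q1 b + q3 a * q0 b).
Definition qreal (r : R) : quat := Q r 0 0 0.
Definition qcplx (a b : R) : quat := Q a b 0 0.

(** * Maps C = R^2 -> H, written as functions of (x, y), z = x + i y *)
Definition qmap := R -> R -> quat.

Definition Dx (g : qmap) : qmap := fun x y =>
  Q (Derive (fun s => q0 (g s y)) x) (Derive (fun s => q1 (g s y)) x)
    (Derive (fun s => q2 (g s y)) x) (Derive (fun s => q3 (g s y)) x).
Definition Dy (g : qmap) : qmap := fun x y =>
  Q (Derive (fun t => q0 (g x t)) y) (Derive (fun t => q1 (g x t)) y)
    (Derive (fun t => q2 (g x t)) y) (Derive (fun t => q3 (g x t)) y).

Definition has_partials (g : qmap) : Prop :=
  forall x y,
    ex_derive (fun s => q0 (g s y)) x /\ ex_derive (fun s => q1 (g s y)) x /\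
    ex_derive (fun s => q2 (g s y)) x /\ ex_derive (fun s => q3 (g s y)) x /\
    ex_derive (fun t => q0 (g x t)) y /\ ex_derive (fun t => q1 (g x t)) y /\
    ex_derive (fun t => q2 (g x t)) y /\ ex_derive (fun t => q3 (g x t)) y.

Definition qcont (g : qmap) : Prop :=
  forall x y,
    continuous (fun p : R * R => q0 (g (fst p) (snd p))) (x, y) /\
    continuous (fun p : R * R => q1 (g (fst p) (snd p))) (x, y) /\
    continuous (fun p : R * R => q2 (g (fst p) (snd p))) (x, y) /\
    continuous (fun p : R * R => q3 (g (fst p) (snd p))) (x, y).

(** C^infinity: g lies in a class of continuous maps with partial derivatives
    which is closed under taking partial derivatives *)
Definition smooth (g : qmap) : Prop :=
  exists P : qmap -> Prop, P g /\
    forall h, P h -> qcont h /\ has_partials h /\ P (Dx h) /\ P (Dy h).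

(** * The torus T^2 = C / Gamma, Gamma spanned by w1 = (w1x,w1y), w2 = (w2x,w2y) *)
Definition lattice_nondeg (w1x w1y w2x w2y : R) : Prop :=
  w1x * w2y - w1y * w2x <> 0.
Definition periodic (w1x w1y w2x w2y : R) (g : qmap) : Prop :=
  forall x y, g (x + w1x) (y + w1y) = g x y /\ g (x + w2x) (y + w2y) = g x y.

(** Hodge star on 1-forms: ( *dg)(d/dx) = dg(d/dy), ( *dg)(d/dy) = - dg(d/dx).
    "*dg = N dg" evaluated on d/dx and d/dy. *)
Definition star_eq_left (N g : qmap) : Prop :=
  forall x y, Dy g x y = qmul (N x y) (Dx g x y) /\
              qopp (Dx g x y) = qmul (N x y) (Dy g x y).

Definition conformal_immersion (f N : qmap) : Prop :=
  smooth f /\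
  (forall x y (a b : R),
      qadd (qmul (qreal a) (Dx f x y)) (qmul (qreal b) (Dy f x y)) = qzero ->
      a = 0 /\ b = 0) /\
  star_eq_left N f.

Definition holomorphic (N alpha : qmap) : Prop :=
  smooth alpha /\ star_eq_left N alpha.

(** H^0: Gamma-periodic holomorphic maps (trivial multiplier) *)
Definition inH0 (w1x w1y w2x w2y : R) (N alpha : qmap) : Prop :=
  holomorphic N alpha /\ periodic w1x w1y w2x w2y alpha.

Definition in_span_1_f (f alpha : qmap) : Prop :=
  exists a b : quat, forall x y, alpha x y = qadd a (qmul (f x y) b).

Definition darboux_T (f alpha T : qmap) : Prop :=
  forall x y,
    Dx alpha x y = qopp (qmul (Dx f x y) (qmul (T x y) (alpha x y))) /\
    Dy alpha x y = qopp (qmul (Dy f x y) (qmul (T x y) (alpha x y))).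

(** Points of HP^1: nonzero vectors (u1,u2) in H^2 modulo right multiplication
    by nonzero quaternions.  (u1,u2) represents the point (u1,u2)H. *)
Definition same_point (u1 u2 v1 v2 : quat) : Prop :=
  exists l : quat, l <> qzero /\ u1 = qmul v1 l /\ u2 = qmul v2 l.

(** The Darboux transform fhat = (f nu + alpha, nu) H with nu = T alpha is a
    constant map into HP^1 = H u {oo}. *)
Definition darboux_constant (f alpha T : qmap) : Prop :=
  exists c1 c2 : quat, (c1 <> qzero \/ c2 <> qzero) /\
    forall x y,
      let nu := qmul (T x y) (alpha x y) in
      same_point (qadd (qmul (f x y) nu) (alpha x y)) nu c1 c2.

(** complex structure on H^0: right multiplication by C = R + R i in H.
    dim_C H^0 = 4. *)
Definition lincomb4 (e1 e2 e3 e4 : qmap) (c1 c2 c3 c4 : quat) : qmap :=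
  fun x y => qadd (qadd (qmul (e1 x y) c1) (qmul (e2 x y) c2))
                  (qadd (qmul (e3 x y) c3) (qmul (e4 x y) c4)).

Definition dimC_H0_eq4 (w1x w1y w2x w2y : R) (N : qmap) : Prop :=
  exists e1 e2 e3 e4 : qmap,
    inH0 w1x w1y w2x w2y N e1 /\ inH0 w1x w1y w2x w2y N e2 /\
    inH0 w1x w1y w2x w2y N e3 /\ inH0 w1x w1y w2x w2y N e4 /\
    (forall a1 b1 a2 b2 a3 b3 a4 b4 : R,
       (forall x y, lincomb4 e1 e2 e3 e4 (qcplx a1 b1) (qcplx a2 b2)
                      (qcplx a3 b3) (qcplx a4 b4) x y = qzero) ->
       a1 = 0 /\ b1 = 0 /\ a2 = 0 /\ b2 = 0 /\ a3 = 0 /\ b3 = 0 /\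
       a4 = 0 /\ b4 = 0) /\
    (forall alpha, inH0 w1x w1y w2x w2y N alpha ->
       exists a1 b1 a2 b2 a3 b3 a4 b4 : R,
         alpha = lincomb4 e1 e2 e3 e4 (qcplx a1 b1) (qcplx a2 b2)
                   (qcplx a3 b3) (qcplx a4 b4)).

(** For alpha = a + f b, differentiating gives d alpha = df b, so the
    defining relation d alpha = - df T alpha reads df (b + T alpha) = 0.  Since df has
    no kernel and H has no zero divisors, nu = T alpha = - b is constant, and then
    (f nu + alpha, nu) = (a, - b) is a constant point of HP^1.  For the second claim,
    the maps a + f b form an 8-dimensional real subspace of H^0 (1 and f are
    H-independent because df <> 0); if dim_C H^0 = 4 this subspace is all of H^0,
    so every alpha in H^0 lies in span_H {1, f}. *)

From Stdlib Require Import Reals Lra Lia Classical FunctionalExtensionality.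
From Coquelicot Require Import Coquelicot.
From mathcomp Require all_boot all_algebra Rstruct.
Open Scope R_scope.

Ltac qring :=
  repeat match goal with q : quat |- _ => destruct q end;
  unfold qadd, qopp, qmul, qreal, qzero, qone; simpl; f_equal; ring.

Lemma qadd_0_l (q : quat) : qadd qzero q = q.
Proof. qring. Qed.

Lemma qmul_assoc (p q r : quat) : qmul (qmul p q) r = qmul p (qmul q r).
Proof. qring. Qed.

Lemma qmul_opp_l (p q : quat) : qmul (qopp p) q = qopp (qmul p q).
Proof. qring. Qed.

Lemma qmul_qadd_r (p q r : quat) : qmul p (qadd q r) = qadd (qmul p q) (qmul p r).
Proof. qring. Qed.

Lemma qadd_opp_l (q : quat) : qadd (qopp q) q = qzero.
Proof. qring. Qed.

Lemma qadd_eq0 (p q : quat) : qadd p q = qzero -> q = qopp p.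
Proof.
  destruct p, q; unfold qadd, qopp, qzero; simpl; intros E; injection E; intros.
  f_equal; lra.
Qed.

Lemma qopp_opp (q : quat) : qopp (qopp q) = q.
Proof. qring. Qed.

Lemma qmul_0_r (q : quat) : qmul q qzero = qzero.
Proof. qring. Qed.

Definition qconj (q : quat) : quat := Q (q0 q) (- q1 q) (- q2 q) (- q3 q).

Definition qnorm2 (q : quat) : R := q0 q ^ 2 + q1 q ^ 2 + q2 q ^ 2 + q3 q ^ 2.

Lemma qconj_mul (p q : quat) : qmul (qconj p) (qmul p q) = qmul (qreal (qnorm2 p)) q.
Proof. unfold qconj, qnorm2; qring. Qed.

Lemma qnorm2_eq0 (q : quat) : qnorm2 q = 0 -> q = qzero.
Proof.
  destruct q as [a b c d]; unfold qnorm2, qzero; simpl; intros E.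
  f_equal; nra.
Qed.

Lemma qmul_eq0_r (p q : quat) : p <> qzero -> qmul p q = qzero -> q = qzero.
Proof.
  intros Hp Hpq.
  assert (Hn : qnorm2 p <> 0) by (intro E; exact (Hp (qnorm2_eq0 p E))).
  assert (E : qmul (qreal (qnorm2 p)) q = qzero)
    by (rewrite <- qconj_mul, Hpq; apply qmul_0_r).
  revert E; generalize (qnorm2 p) Hn; intros n Hn'.
  destruct q; unfold qmul, qreal, qzero; simpl; intros E; injection E; intros.
  f_equal; apply (Rmult_eq_reg_l n); lra.
Qed.

Definition qDerive (u : R -> quat) (x : R) : quat :=
  Q (Derive (fun s => q0 (u s)) x) (Derive (fun s => q1 (u s)) x)
    (Derive (fun s => q2 (u s)) x) (Derive (fun s => q3 (u s)) x).

Definition qex_derive (u : R -> quat) (x : R) : Prop :=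
  ex_derive (fun s => q0 (u s)) x /\ ex_derive (fun s => q1 (u s)) x /\
  ex_derive (fun s => q2 (u s)) x /\ ex_derive (fun s => q3 (u s)) x.

(* [auto_derive] cannot differentiate through the projections [q0 .. q3], so
   [split_components] first abstracts the four components as real functions;
   [eta_reduce] undoes the eta-expansions that [auto_derive] leaves behind. *)
Ltac eta_reduce :=
  repeat match goal with |- context [fun s => ?g s] => change (fun s => g s) with g end.

Ltac split_components u :=
  let u0 := fresh "u0" in let u1 := fresh "u1" in
  let u2 := fresh "u2" in let u3 := fresh "u3" in
  set (u0 := fun s => q0 (u s)) in *; set (u1 := fun s => q1 (u s)) in *;
  set (u2 := fun s => q2 (u s)) in *; set (u3 := fun s => q3 (u s)) in *;
  assert (Eu : u = fun s => Q (u0 s) (u1 s) (u2 s) (u3 s))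
    by (let s := fresh "s" in
        extensionality s; unfold u0, u1, u2, u3; destruct (u s); reflexivity);
  clearbody u0 u1 u2 u3; subst u.

Lemma qex_derive_affine (u : R -> quat) (a b : quat) (x : R) :
  qex_derive u x -> qex_derive (fun s => qadd a (qmul (u s) b)) x.
Proof.
  unfold qex_derive. split_components u. intros (H0 & H1 & H2 & H3).
  unfold qadd, qmul; simpl in *.
  repeat split; auto_derive; repeat split; assumption.
Qed.

Lemma qDerive_affine (u : R -> quat) (a b : quat) (x : R) :
  qex_derive u x -> qDerive (fun s => qadd a (qmul (u s) b)) x = qmul (qDerive u x) b.
Proof.
  unfold qex_derive, qDerive. split_components u. intros (H0 & H1 & H2 & H3).
  unfold qadd, qmul; simpl in *.
  f_equal; apply is_derive_unique; auto_derive;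
    first [repeat split; assumption | eta_reduce; ring].
Qed.

Definition qcontinuous {U : UniformSpace} (u : U -> quat) (p : U) : Prop :=
  continuous (fun z => q0 (u z)) p /\ continuous (fun z => q1 (u z)) p /\
  continuous (fun z => q2 (u z)) p /\ continuous (fun z => q3 (u z)) p.

Lemma qcontinuous_affine {U : UniformSpace} (u : U -> quat) (a b : quat) (p : U) :
  qcontinuous u p -> qcontinuous (fun z => qadd a (qmul (u z) b)) p.
Proof.
  unfold qcontinuous. split_components u. intros (H0 & H1 & H2 & H3).
  unfold qadd, qmul, Rminus; simpl in *.
  repeat split;
  repeat match goal with
  | |- continuous (fun z => @?f z + @?g z) _ =>
      apply (continuous_plus (V := R_NormedModule) f g)
  | |- continuous (fun z => - @?f z) _ => apply (continuous_opp (V := R_NormedModule) f)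
  | |- continuous (fun z => @?f z * @?g z) _ => apply (continuous_mult (K := R_AbsRing) f g)
  | |- continuous (fun _ => _) _ => apply continuous_const
  end; assumption.
Qed.

Definition qaffine (g : qmap) (a b : quat) : qmap := fun x y => qadd a (qmul (g x y) b).

Lemma has_partials_iff (g : qmap) :
  has_partials g <-> forall x y, qex_derive (fun s => g s y) x /\ qex_derive (fun t => g x t) y.
Proof. unfold has_partials, qex_derive; split; intros H x y; specialize (H x y); intuition. Qed.

Lemma Dx_qaffine (g : qmap) (a b : quat) (x y : R) :
  has_partials g -> Dx (qaffine g a b) x y = qmul (Dx g x y) b.
Proof.
  intros Hg.
  exact (qDerive_affine (fun s => g s y) a b x (proj1 (proj1 (has_partials_iff g) Hg x y))).
Qed.

Lemma Dy_qaffine (g : qmap) (a b : quat) (x y : R) :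
  has_partials g -> Dy (qaffine g a b) x y = qmul (Dy g x y) b.
Proof.
  intros Hg.
  exact (qDerive_affine (fun t => g x t) a b y (proj2 (proj1 (has_partials_iff g) Hg x y))).
Qed.

Lemma has_partials_qaffine (g : qmap) (a b : quat) :
  has_partials g -> has_partials (qaffine g a b).
Proof.
  rewrite !has_partials_iff. intros Hg x y. unfold qaffine.
  split; apply qex_derive_affine; [exact (proj1 (Hg x y)) | exact (proj2 (Hg x y))].
Qed.

Lemma qcont_qaffine (g : qmap) (a b : quat) : qcont g -> qcont (qaffine g a b).
Proof.
  intros Hg x y. exact (qcontinuous_affine (fun p => g (fst p) (snd p)) a b (x, y) (Hg x y)).
Qed.

Lemma smooth_has_partials (g : qmap) : smooth g -> has_partials g.
Proof. intros (P & Pg & HP). apply HP, Pg. Qed.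

Lemma smooth_qaffine (g : qmap) (a b : quat) : smooth g -> smooth (qaffine g a b).
Proof.
  intros (P & Pg & HP).
  exists (fun h => exists g' a' b', P g' /\ h = qaffine g' a' b').
  split; [now exists g, a, b|].
  intros h (g' & a' & b' & Pg' & ->). destruct (HP g' Pg') as (Hc & Hp & PDx & PDy).
  split; [exact (qcont_qaffine g' a' b' Hc)|].
  split; [exact (has_partials_qaffine g' a' b' Hp)|].
  split.
  - exists (Dx g'), qzero, b'. split; [exact PDx|].
    extensionality x; extensionality y.
    rewrite Dx_qaffine by exact Hp. symmetry; apply qadd_0_l.
  - exists (Dy g'), qzero, b'. split; [exact PDy|].
    extensionality x; extensionality y.
    rewrite Dy_qaffine by exact Hp. symmetry; apply qadd_0_l.
Qed.

Lemma holomorphic_qaffine (N g : qmap) (a b : quat) :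
  holomorphic N g -> holomorphic N (qaffine g a b).
Proof.
  intros [Hs Hstar]. pose proof (smooth_has_partials g Hs) as Hp.
  split; [now apply smooth_qaffine|].
  intros x y. rewrite Dx_qaffine, Dy_qaffine by exact Hp.
  destruct (Hstar x y) as [Ey Ex]. split.
  - now rewrite Ey, qmul_assoc.
  - now rewrite <- qmul_opp_l, Ex, qmul_assoc.
Qed.

Lemma periodic_qaffine (w1x w1y w2x w2y : R) (g : qmap) (a b : quat) :
  periodic w1x w1y w2x w2y g -> periodic w1x w1y w2x w2y (qaffine g a b).
Proof. intros Hg x y. unfold qaffine. now destruct (Hg x y) as [-> ->]. Qed.

Lemma inH0_qaffine (w1x w1y w2x w2y : R) (N g : qmap) (a b : quat) :
  inH0 w1x w1y w2x w2y N g -> inH0 w1x w1y w2x w2y N (qaffine g a b).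
Proof. intros [Hh Hp]. split; [now apply holomorphic_qaffine | now apply periodic_qaffine]. Qed.

Lemma conformal_inH0 (w1x w1y w2x w2y : R) (f N : qmap) :
  periodic w1x w1y w2x w2y f -> conformal_immersion f N -> inH0 w1x w1y w2x w2y N f.
Proof. intros Hper (Hs & _ & Hstar). split; [split|]; assumption. Qed.

Lemma conformal_Dx_neq0 (f N : qmap) (x y : R) : conformal_immersion f N -> Dx f x y <> qzero.
Proof.
  intros (_ & Hinj & _) E. destruct (Hinj x y 1 0) as [H10 _]; [|lra].
  rewrite E. qring.
Qed.

Lemma conformal_has_partials (f N : qmap) : conformal_immersion f N -> has_partials f.
Proof. intros (Hs & _). now apply smooth_has_partials. Qed.

Lemma Dx_const (c : quat) (x y : R) : Dx (fun _ _ => c) x y = qzero.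
Proof. unfold Dx. rewrite !Derive_const. reflexivity. Qed.

Lemma qaffine_eq0 (f N : qmap) (a b : quat) :
  conformal_immersion f N -> (forall x y, qaffine f a b x y = qzero) -> a = qzero /\ b = qzero.
Proof.
  intros Hf Hz.
  assert (Hb : b = qzero).
  { apply (qmul_eq0_r (Dx f 0 0)); [exact (conformal_Dx_neq0 f N 0 0 Hf)|].
    rewrite <- (Dx_qaffine f a b) by exact (conformal_has_partials f N Hf).
    replace (qaffine f a b) with (fun _ _ : R => qzero)
      by (extensionality x; extensionality y; symmetry; apply Hz).
    apply Dx_const. }
  split; [|exact Hb].
  rewrite <- (Hz 0 0). unfold qaffine. rewrite Hb, qmul_0_r. qring.
Qed.

Lemma darboux_nu_eq (f N alpha T : qmap) (a b : quat) :
  conformal_immersion f N -> (forall x y, alpha x y = qadd a (qmul (f x y) b)) ->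
  darboux_T f alpha T -> forall x y, qmul (T x y) (alpha x y) = qopp b.
Proof.
  intros Hf Hab HT x y.
  assert (Ea : alpha = qaffine f a b)
    by (extensionality s; extensionality t; apply Hab).
  destruct (HT x y) as [Hx _].
  rewrite Ea in Hx at 1.
  rewrite Dx_qaffine in Hx by exact (conformal_has_partials f N Hf).
  apply qadd_eq0, (qmul_eq0_r (Dx f x y)); [exact (conformal_Dx_neq0 f N x y Hf)|].
  rewrite qmul_qadd_r, Hx. apply qadd_opp_l.
Qed.

Lemma qone_neq0 : qone <> qzero.
Proof. intro E. injection E. lra. Qed.

Lemma darboux_constant_of_span (f N alpha T : qmap) :
  conformal_immersion f N -> in_span_1_f f alpha -> (forall x y, alpha x y <> qzero) ->
  darboux_T f alpha T -> darboux_constant f alpha T.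
Proof.
  intros Hf (a & b & Hab) Hnz HT.
  exists a, (qopp b). split.
  - destruct (classic (a = qzero)) as [Ha | Ha]; [right | now left].
    intro Hb. apply (Hnz 0 0).
    assert (Hb0 : b = qzero) by (rewrite <- (qopp_opp b), Hb; qring).
    rewrite Hab, Ha, Hb0, qmul_0_r. qring.
  - intros x y. simpl. rewrite (darboux_nu_eq f N alpha T a b Hf Hab HT x y).
    exists qone. split; [exact qone_neq0|].
    rewrite Hab. split; qring.
Qed.

(* Families of n + 1 real functions: [sum_f_R0 _ n] has the n + 1 terms 0 .. n. *)
Definition in_real_span {X : Type} (n : nat) (w : nat -> X -> R) (g : X -> R) : Prop :=
  exists c : nat -> R, forall t, g t = sum_f_R0 (fun j => c j * w j t) n.

Definition real_independent {X : Type} (n : nat) (v : nat -> X -> R) : Prop :=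
  forall u : nat -> R, (forall t, sum_f_R0 (fun i => u i * v i t) n = 0) ->
  forall i, (i <= n)%nat -> u i = 0.

Module RealSpan.
Import all_boot all_algebra Rstruct.
Import GRing.Theory.
Local Open Scope ring_scope.

Lemma span_of_free_in_span (F : fieldType) (X : Type) (n : nat)
    (w v : 'I_n -> X -> F) :
  (forall i, exists r : 'I_n -> F, forall t, v i t = \sum_j r j * w j t) ->
  (forall u : 'I_n -> F, (forall t, \sum_i u i * v i t = 0) -> forall i, u i = 0) ->
  forall c : 'I_n -> F, exists d : 'I_n -> F,
    forall t, \sum_j c j * w j t = \sum_i d i * v i t.
Proof.
move=> v_in_span v_free c.
have [r Er] := fin_all_exists v_in_span.
pose M := \matrix_(i, j) r i j.
have comb_v (u : 'rV[F]_n) t : \sum_i u 0 i * v i t = \sum_j (u *m M) 0 j * w j t.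
  under eq_bigr => i _ do rewrite Er big_distrr /=.
  rewrite exchange_big /=; apply: eq_bigr => j _.
  rewrite !mxE big_distrl /=; apply: eq_bigr => i _.
  by rewrite !mxE mulrA.
have M_unit : M \in unitmx.
  rewrite -row_free_unit; apply: inj_row_free => u uM0.
  apply/rowP => i; rewrite mxE; apply: (v_free (fun i => u 0 i)) => t.
  by rewrite comb_v uM0; apply: big1 => j _; rewrite mxE mul0r.
exists (fun i => ((\row_j c j) *m invmx M) 0 i) => t.
by rewrite comb_v mulmxKV //; apply: eq_bigr => j _; rewrite mxE.
Qed.

Lemma sum_f_R0_ord (g : nat -> R) n : sum_f_R0 g n = \sum_(i < n.+1) g i.
Proof. by rewrite sum_f_R0E big_mkord. Qed.

Lemma in_real_span_transfer (X : Type) (n : nat) (w v : nat -> X -> R) :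
  (forall i, le i n -> in_real_span n w (v i)) -> real_independent n v ->
  forall g, in_real_span n w g -> in_real_span n v g.
Proof.
move=> v_in_span v_free g [c Ec].
have [||d Ed] := @span_of_free_in_span _ X n.+1 (fun j => w j) (fun i => v i) _ _
  (fun j => c j).
- move=> i; have [r Er] := v_in_span i (leP (leq_ord i)).
  by exists (fun j => r j) => t; rewrite Er sum_f_R0_ord.
- move=> u Hu i; pose u' k := if (k <= n)%N then u (inord k) else 0.
  have := v_free u' _ i (leP (leq_ord i)); rewrite /u' leq_ord inord_val; apply=> t.
  rewrite sum_f_R0_ord -[RHS](Hu t); apply: eq_bigr => j _.
  by rewrite leq_ord inord_val.
exists (fun k => d (inord k)) => t.
rewrite Ec !sum_f_R0_ord Ed; apply: eq_bigr => j _; by rewrite inord_val.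
Qed.
End RealSpan.

(* Quaternionic maps are compared as real functions on R * R * nat; indices k >= 3 all
   read the last coordinate, which is harmless since only equalities for all k are used. *)
Definition qcoord (q : quat) (k : nat) : R :=
  match k with 0 => q0 q | 1 => q1 q | 2 => q2 q | _ => q3 q end%nat.

Definition qmap_coords (g : qmap) (t : R * R * nat) : R :=
  let '(x, y, k) := t in qcoord (g x y) k.

Lemma qmap_coords_inj (g h : qmap) :
  (forall t, qmap_coords g t = qmap_coords h t) -> forall x y, g x y = h x y.
Proof.
  intros E x y. pose proof (fun k => E (x, y, k)) as Ek; simpl in Ek.
  destruct (g x y), (h x y).
  f_equal; [apply (Ek 0%nat) | apply (Ek 1%nat) | apply (Ek 2%nat) | apply (Ek 3%nat)].
Qed.

Definition qi : quat := Q 0 1 0 0.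
Definition qj : quat := Q 0 0 1 0.
Definition qk : quat := Q 0 0 0 1.

Definition quat_unit (k : nat) : quat :=
  match k with 0 => qone | 1 => qi | 2 => qj | _ => qk end%nat.

Definition span_1_f_basis (f : qmap) (i : nat) : qmap :=
  if Nat.ltb i 4 then qaffine f (quat_unit i) qzero else qaffine f qzero (quat_unit (i - 4)).

Definition coef_quat (u : nat -> R) (k : nat) : quat :=
  Q (u k) (u (S k)) (u (S (S k))) (u (S (S (S k)))).

Lemma span_1_f_basis_comb (f : qmap) (u : nat -> R) (t : R * R * nat) :
  sum_f_R0 (fun i => u i * qmap_coords (span_1_f_basis f i) t) 7
  = qmap_coords (qaffine f (coef_quat u 0%nat) (coef_quat u 4%nat)) t.
Proof.
  destruct t as [[x y] k]. simpl.
  unfold qaffine, quat_unit, qadd, qmul, qone, qi, qj, qk, qzero; simpl.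
  destruct k as [|[|[|[|k]]]]; simpl; destruct (f x y); ring.
Qed.

Lemma span_1_f_basis_inH0 (w1x w1y w2x w2y : R) (f N : qmap) (i : nat) :
  inH0 w1x w1y w2x w2y N f -> inH0 w1x w1y w2x w2y N (span_1_f_basis f i).
Proof.
  intros Hf. unfold span_1_f_basis. destruct (Nat.ltb i 4); now apply inH0_qaffine.
Qed.

Lemma span_1_f_basis_independent (f N : qmap) :
  conformal_immersion f N -> real_independent 7 (fun i => qmap_coords (span_1_f_basis f i)).
Proof.
  intros Hf u Hu.
  assert (Hz : forall x y, qaffine f (coef_quat u 0%nat) (coef_quat u 4%nat) x y = qzero).
  { apply qmap_coords_inj. intros [[x y] k].
    rewrite <- span_1_f_basis_comb, Hu. destruct k as [|[|[|[|k]]]]; reflexivity. }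
  destruct (qaffine_eq0 f N _ _ Hf Hz) as [Ha Hb].
  intros i Hi. unfold coef_quat, qzero in Ha, Hb. injection Ha; injection Hb; intros.
  do 8 (destruct i as [|i]; [assumption|]). lia.
Qed.

Definition complex_frame (e1 e2 e3 e4 : qmap) (j : nat) : qmap :=
  match j with
  | 0 => e1 | 1 => fun x y => qmul (e1 x y) qi
  | 2 => e2 | 3 => fun x y => qmul (e2 x y) qi
  | 4 => e3 | 5 => fun x y => qmul (e3 x y) qi
  | 6 => e4 | _ => fun x y => qmul (e4 x y) qi
  end%nat.

Lemma lincomb4_coords (e1 e2 e3 e4 : qmap) (u : nat -> R) (t : R * R * nat) :
  qmap_coords (lincomb4 e1 e2 e3 e4 (qcplx (u 0) (u 1)) (qcplx (u 2) (u 3))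
                 (qcplx (u 4) (u 5)) (qcplx (u 6) (u 7)))%nat t
  = sum_f_R0 (fun j => u j * qmap_coords (complex_frame e1 e2 e3 e4 j) t) 7.
Proof.
  destruct t as [[x y] k]. simpl.
  unfold lincomb4, qadd, qmul, qcplx, qi; simpl.
  destruct k as [|[|[|[|k]]]]; simpl;
    destruct (e1 x y), (e2 x y), (e3 x y), (e4 x y); ring.
Qed.

Lemma dimC_H0_eq4_real_span (w1x w1y w2x w2y : R) (N : qmap) :
  dimC_H0_eq4 w1x w1y w2x w2y N ->
  exists e1 e2 e3 e4 : qmap, forall beta, inH0 w1x w1y w2x w2y N beta ->
    in_real_span 7 (fun j => qmap_coords (complex_frame e1 e2 e3 e4 j)) (qmap_coords beta).
Proof.
  intros (e1 & e2 & e3 & e4 & _ & _ & _ & _ & _ & Hspan).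
  exists e1, e2, e3, e4. intros beta Hbeta.
  destruct (Hspan beta Hbeta) as (a1 & b1 & a2 & b2 & a3 & b3 & a4 & b4 & ->).
  exists (fun j => match j with
           | 0 => a1 | 1 => b1 | 2 => a2 | 3 => b2
           | 4 => a3 | 5 => b3 | 6 => a4 | _ => b4 end%nat).
  intro t. exact (lincomb4_coords e1 e2 e3 e4 _ t).
Qed.

Lemma in_span_1_f_of_dimC_H0_eq4 (w1x w1y w2x w2y : R) (f N alpha : qmap) :
  periodic w1x w1y w2x w2y f -> conformal_immersion f N ->
  dimC_H0_eq4 w1x w1y w2x w2y N -> inH0 w1x w1y w2x w2y N alpha -> in_span_1_f f alpha.
Proof.
  intros Hper Hf Hdim Halpha.
  destruct (dimC_H0_eq4_real_span _ _ _ _ N Hdim) as (e1 & e2 & e3 & e4 & Hspan).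
  pose proof (conformal_inH0 _ _ _ _ f N Hper Hf) as HfH0.
  destruct (RealSpan.in_real_span_transfer _ 7 _ (fun i => qmap_coords (span_1_f_basis f i))
              (fun i _ => Hspan _ (span_1_f_basis_inH0 _ _ _ _ f N i HfH0))
              (span_1_f_basis_independent f N Hf) _ (Hspan alpha Halpha)) as [d Hd].
  exists (coef_quat d 0%nat), (coef_quat d 4%nat).
  apply qmap_coords_inj. intro t. rewrite Hd. apply span_1_f_basis_comb.
Qed.

Theorem corollary3p5 (w1x w1y w2x w2y : R) (f N : qmap) :
  lattice_nondeg w1x w1y w2x w2y ->
  periodic w1x w1y w2x w2y f ->
  conformal_immersion f N ->
  (forall alpha T : qmap,
      inH0 w1x w1y w2x w2y N alpha ->
      in_span_1_f f alpha ->
      (forall x y, alpha x y <> qzero) ->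
      darboux_T f alpha T ->
      darboux_constant f alpha T) /\
  (dimC_H0_eq4 w1x w1y w2x w2y N ->
   forall alpha T : qmap,
      inH0 w1x w1y w2x w2y N alpha ->
      (forall x y, alpha x y <> qzero) ->
      darboux_T f alpha T ->
      darboux_constant f alpha T).
Proof.
  intros _ Hper Hf. split.
  - intros alpha T _ Hspan Hnz HT.
    exact (darboux_constant_of_span f N alpha T Hf Hspan Hnz HT).
  - intros Hdim alpha T Halpha Hnz HT.
    apply (darboux_constant_of_span f N alpha T Hf); [|exact Hnz | exact HT].
    exact (in_span_1_f_of_dimC_H0_eq4 _ _ _ _ f N alpha Hper Hf Hdim Halpha).
Qed.
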